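(* Let $V$ be a vector space over $\mathbf k$ regarded as a graded space concentrated in degree $0$. Then Nijenhuis Lie algebra structures $(\mu,P)$ on $V$ are in bijection with Maurer–Cartan elements of the $L_\infty$-algebra $\mathfrak C_{\mathrm{NjL}}(V)$.
   Context: $\mathbf k$ is a field of characteristic $0$; graded spaces are homologically graded. $sV$ is the suspension, $(sV)_n=V_{n-1}$, $s$ of degree $1$. For homogeneous $x_1,\dots,x_n$ and $\sigma\in\mathbb S_n$, $\epsilon(\sigma;x_1,\dots,x_n)$ is defined by $x_1\odot\cdots\odot x_n=\epsilon(\sigma;x)\,x_{\sigma(1)}\odot\cdots\odot x_{\sigma(n)}$ in the graded symmetric algebra, and $\chi(\sigma;x)=\mathrm{sgn}(\sigma)\epsilon(\sigma;x)$. For $i_1+\dots+i_r=N$, $\mathrm{sh}(i_1,\dots,i_r)$ is the set of $\sigma\in\mathbb S_N$ increasing on each consecutive block of sizes $i_1,\dots,i_r$ and with $\sigma(1)<\sigma(i_1+1)<\dots<\sigma(i_1+\dots+i_{r-1}+1)$. Shuffle brace: for $F\in\mathrm{Hom}((sV)^{\otimes m},sV)$, $G_j\in\mathrm{Hom}((sV)^{\otimes k_j},sV)$, $1\le n\le m$, $F\{G_1,\dots,G_n\}:=\sum_{i_1+\dots+i_{n+1}+n=m,\,i_p\ge0}\sum_{\sigma\in\mathrm{sh}(1^{i_1},k_1,1^{i_2},\dots,k_n,1^{i_{n+1}})}(F\circ(\mathrm{id}^{\otimes i_1}\otimes G_1\otimes\mathrm{id}^{\otimes i_2}\otimes\cdots\otimes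 G_n\otimes\mathrm{id}^{\otimes i_{n+1}}))\sigma^{-1}$, where $1^i$ denotes $i$ entries $1$, tensor products of maps obey the Koszul sign rule, and $(H\sigma^{-1})(x_1\otimes\cdots\otimes x_N):=\epsilon(\sigma;x_1,\dots,x_N)H(x_{\sigma(1)}\otimes\cdots\otimes x_{\sigma(N)})$. Maps on $(sV)^{\odot m}$ are identified with $\mathbb S_m$-invariant maps on $(sV)^{\otimes m}$. $[F,H]_{\mathrm{RN}}:=F\{H\}-(-1)^{|F||H|}H\{F\}$. $\mathfrak C_{\mathrm{Lie}}(V)=\prod_{n\ge1}\mathrm{Hom}((sV)^{\odot n},sV)$, $\mathfrak C_{\mathrm{NjO}}(V)=\prod_{n\ge1}\mathrm{Hom}((sV)^{\odot n},V)$, $\mathfrak C_{\mathrm{NjL}}(V)=\mathfrak C_{\mathrm{Lie}}(V)\oplus\mathfrak C_{\mathrm{NjO}}(V)$, graded by degree of maps. For $g\in\mathfrak C_{\mathrm{NjO}}(V)$ put $sg=s\circ g$; elements of $\mathfrak C_{\mathrm{Lie}}(V)$ are written $sh$ with $h=s^{-1}\circ sh$, so $|sh|=|h|+1$. Operations: $l_1=0$; $l_2(sf\otimes sh)=[sf,sh]_{\mathrm{RN}}$; for $sh\in\mathrm{Hom}((sV)^{\odot n},sV)$, $n\ge1$, and $g_1,\dots,g_n\in\mathfrak C_{\mathrm{NjO}}(V)$: $l_{n+1}(sh\otimes g_1\otimes\cdots\otimes g_n)=\sum_{\sigma\in\mathbb S_n}\chi(\sigma;g_1,\dots,g_n)(-1)^{n(|h|+1)+\sum_{p=1}^{n-1}\sum_{j=1}^p|g_{\sigma(j)}|}\sum_{k=0}^n(-1)^{(|h|+1)\sum_{i=1}^k(|g_{\sigma(i)}|+1)+k}s^{-1}\circ\big(sg_{\sigma(1)}\{sg_{\sigma(2)}\{\cdots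 sg_{\sigma(k)}\{sh\{sg_{\sigma(k+1)},\dots,sg_{\sigma(n)}\}\}\cdots\}\}\big)$ (for $k=0$ the term is $s^{-1}\circ sh\{sg_{\sigma(1)},\dots,sg_{\sigma(n)}\}$); $l_{n+1}(g_1\otimes\cdots\otimes g_k\otimes sh\otimes g_{k+1}\otimes\cdots\otimes g_n):=(-1)^{(|h|+1)\sum_{j\le k}|g_j|+k}l_{n+1}(sh\otimes g_1\otimes\cdots\otimes g_n)$; all other components vanish. This is an $L_\infty$-algebra: a graded space with maps $l_n$ of degree $n-2$, graded antisymmetric with respect to $\chi$, satisfying $\sum_{i=1}^n\sum_{\sigma\in\mathrm{Sh}(i,n-i)}\chi(\sigma;x)(-1)^{i(n-i)}l_{n-i+1}(l_i(x_{\sigma(1)},\dots,x_{\sigma(i)}),x_{\sigma(i+1)},\dots,x_{\sigma(n)})=0$ (with $\mathrm{Sh}(i,n-i)$ the $(i,n-i)$-shuffles). A Maurer–Cartan element is $\alpha$ of degree $-1$ with $\sum_{n\ge1}(-1)^{n(n-1)/2}\frac1{n!}l_n(\alpha^{\otimes n})=0$. A Nijenhuis Lie algebra structure on $V$ is a Lie bracket $\mu$ and a linear $P$ with $\mu(Pa,Pb)=P(\mu(Pa,b)+\mu(a,Pb)-P\mu(a,b))$. *)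

(* The L_infinity algebra C_NjL(V) of the paper, written out
   concretely for V a vector space concentrated in degree 0 (so sV is
   concentrated in degree 1). *)
From HB Require Import structures.
From mathcomp Require Import all_boot all_order all_algebra all_fingroup.
Set Implicit Arguments. Unset Strict Implicit. Unset Printing Implicit Defensive.
Import GRing.Theory.
Local Open Scope ring_scope.

Section NjL.
Variables (F : fieldType) (V : lmodType F).

(* A map (sV)^{\otimes a} -> sV (or -> V), sV identified with V via s;
   inputs are indexed by 0,1,...,a-1 (the arity a is carried separately). *)
Definition mmap := (nat -> V) -> V.

Definition sgn (n : nat) : F := (-1) ^+ n.

Definition pact (N : nat) (s : 'S_N) (p : nat) : nat :=
  if (insub p : option 'I_N) is Some i then val (s i) else p.

Definition upd (x : nat -> V) (i : nat) (u : V) : nat -> V :=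
  fun j => if j == i then u else x j.

Definition multilinear (a : nat) (H : mmap) : Prop :=
  (forall x y : nat -> V, (forall i, (i < a)%N -> x i = y i) -> H x = H y) /\
  (forall i, (i < a)%N -> forall (x : nat -> V) (c : F) (u v : V),
      H (upd x i (c *: u + v)) = c *: H (upd x i u) + H (upd x i v)).

(* S_a-invariance (H sigma^{-1} = H), where eps(sigma; x) = sgn sigma since
   all inputs lie in sV, of degree 1: maps on (sV)^{\odot a} *)
Definition sym_invariant (a : nat) (H : mmap) : Prop :=
  forall (s : 'S_a) (x : nat -> V), H x = sgn (odd_perm s) *: H (fun p => x (pact s p)).

Definition bstart (bs : seq nat) (j : nat) : nat := sumn (take j bs).
Definition inblock (bs : seq nat) (j p : nat) : bool :=
  (bstart bs j <= p)%N && (p < bstart bs j.+1)%N.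

Definition is_shuffle (bs : seq nat) (s : 'S_(sumn bs)) : bool :=
  [forall p : 'I_(sumn bs), forall q : 'I_(sumn bs),
     ((p < q)%N && [exists j : 'I_(size bs), inblock bs j p && inblock bs j q])
       ==> (s p < s q)%N] &&
  [forall j : 'I_(size bs), (j.+1 < size bs)%N ==>
     (pact s (bstart bs j) < pact s (bstart bs j.+1))%N].

Definition gdef : mmap * nat := (fun _ => 0, 0%N).

(* slot pattern id^{i_1} (x) G_1 (x) id^{i_2} (x) ... (x) G_n (x) id^{i_{n+1}} *)
Definition slots (n : nat) (t : seq nat) : seq (option nat) :=
  flatten [seq nseq (nth 0%N t j) None ++ (if (j < n)%N then [:: Some j] else [::])
          | j <- iota 0 n.+1].

Definition bsize (Gs : seq (mmap * nat)) (o : option nat) : nat :=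
  if o is Some j then (nth gdef Gs j).2 else 1%N.

(* F{G_1,...,G_n}; F has arity mF, Gs lists (G_j, k_j).  A map
   (sV)^{\otimes k} -> sV has degree 1 - k, whence the Koszul sign. *)
Definition brace (Fm : mmap) (mF : nat) (Gs : seq (mmap * nat)) : mmap :=
  fun x =>
  \sum_(t : (size Gs).+1.-tuple 'I_mF.+1 | (sumn (map val t) + size Gs == mF)%N)
   let sl := slots (size Gs) (map val t) in
   let bs := map (bsize Gs) sl in
   \sum_(s : 'S_(sumn bs) | is_shuffle s)
     (sgn (odd_perm s) *
      sgn (\sum_(q < size sl)
             (if nth None sl q is Some j
              then ((nth gdef Gs j).2.+1 * bstart bs q)%N else 0%N))%N)
     *: Fm (fun q => match nth None sl q with
                     | None => x (pact s (bstart bs q))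
                     | Some j => (nth gdef Gs j).1 (fun r => x (pact s (bstart bs q + r)))
                     end).

Definition rn (f : mmap) (a : nat) (h : mmap) (b : nat) : mmap :=
  fun x => brace f a [:: (h, b)] x - sgn (a.+1 * b.+1) *: brace h b [:: (f, a)] x.

(* l_{n+1}(sh (x) g_1 (x) ... (x) g_n), sh of arity n = size gs,
   gs = list of (g_j, arity of g_j); |g_j| = - arity, |h|+1 = 1 - n. *)
Definition lLie (h : mmap) (gs : seq (mmap * nat)) : mmap := fun x =>
  let n := size gs in
  \sum_(s : 'S_n)
    let gsig j := nth gdef gs (pact s j) in
    let chi := sgn (odd_perm s) *
               sgn (\sum_(p < n) \sum_(q < n)
                      (if (p < q)%N && (s q < s p)%N
                       then (nth gdef gs (s p)).2 * (nth gdef gs (s q)).2 else 0))%N in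
    (chi * sgn (n * n.+1 + \sum_(p < n.-1) \sum_(j < p.+1) (gsig j).2)%N) *:
    \sum_(k < n.+1)
      sgn (n.+1 * (\sum_(i < k) (gsig i).2.+1) + k)%N *:
      (foldr (fun j acc => (brace (gsig j).1 (gsig j).2 [:: acc], ((gsig j).2 - 1 + acc.2)%N))
             (brace h n [seq gsig j | j <- iota k (n - k)],
              (n - (n - k) + \sum_(j <- iota k (n - k)) (gsig j).2)%N)
             (iota 0 k)).1 x.

(* homogeneous elements: HLie a f in Hom((sV)^{\odot a}, sV) (degree 1-a),
   HNjo a g in Hom((sV)^{\odot a}, V) (degree -a) *)
Inductive hel := HLie of nat & mmap | HNjo of nat & mmap.
Definition hdef : hel := HNjo 0 (fun _ => 0).
Definition isLie (e : hel) : bool := if e is HLie _ _ then true else false.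
Definition har (e : hel) : nat := match e with HLie a _ => a | HNjo a _ => a end.
Definition hfn (e : hel) : mmap := match e with HLie _ f => f | HNjo _ f => f end.

(* elements of C_NjL(V) = prod_a Hom((sV)^a,sV) (+) prod_a Hom((sV)^a,V) *)
Record cel := Cel { clie : nat -> mmap; cnjo : nat -> mmap }.
Definition czero : cel := Cel (fun _ _ => 0) (fun _ _ => 0).
Definition cLie (a : nat) (f : mmap) : cel :=
  Cel (fun r => if r == a then f else fun _ => 0) (fun _ _ => 0).
Definition cNjo (a : nat) (f : mmap) : cel :=
  Cel (fun _ _ => 0) (fun r => if r == a then f else fun _ => 0).

Definition lbr (es : seq hel) : cel :=
  match es with
  | [:: HLie a f; HLie b h] => cLie (a + b - 1) (rn f a h b)
  | _ =>
    match [seq i <- iota 0 (size es) | isLie (nth hdef es i)] with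
    | [:: k] =>
      let e := nth hdef es k in
      let gs := [seq (hfn e', har e') | e' <- es & ~~ isLie e'] in
      if (har e == size gs) && (0 < size gs)%N then
        cNjo (sumn (map snd gs))
          (fun x => sgn ((har e).+1 * sumn (map snd (take k gs)) + k) *: lLie (hfn e) gs x)
      else czero
    | _ => czero
    end
  end.

(* degree -1 elements are pairs (m, g), m in Hom((sV)^{\odot 2}, sV),
   g in Hom(sV, V) *)
Definition deg_m1 (alpha : mmap * mmap) : Prop :=
  multilinear 2 alpha.1 /\ sym_invariant 2 alpha.1 /\
  multilinear 1 alpha.2 /\ sym_invariant 1 alpha.2.

Definition alpha_list (alpha : mmap * mmap) (w : seq bool) : seq hel :=
  [seq if b then HLie 2 alpha.1 else HNjo 1 alpha.2 | b <- w].

(* partial sums of  sum_{n>=1} (-1)^{n(n-1)/2}/n! l_n(alpha^{(x) n}),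
   l_n(alpha^{(x)n}) expanded multilinearly over the two components *)
Definition mc_psum (alpha : mmap * mmap) (N : nat) : cel :=
  Cel (fun r x => \sum_(1 <= n < N.+1) (sgn 'C(n, 2) / n`!%:R) *:
                    \sum_(w : n.-tuple bool) clie (lbr (alpha_list alpha w)) r x)
      (fun r x => \sum_(1 <= n < N.+1) (sgn 'C(n, 2) / n`!%:R) *:
                    \sum_(w : n.-tuple bool) cnjo (lbr (alpha_list alpha w)) r x).

(* Maurer-Cartan: the series converges to 0 (componentwise, discrete topology) *)
Definition MC_element (alpha : mmap * mmap) : Prop :=
  deg_m1 alpha /\
  forall r, (0 < r)%N -> forall x : nat -> V,
    exists N0, forall N, (N0 <= N)%N ->
      clie (mc_psum alpha N) r x = 0 /\ cnjo (mc_psum alpha N) r x = 0.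

Definition lie_bracket (mu : V -> V -> V) : Prop :=
  (forall (c : F) (a a' b : V), mu (c *: a + a') b = c *: mu a b + mu a' b) /\
  (forall (c : F) (a b b' : V), mu a (c *: b + b') = c *: mu a b + mu a b') /\
  (forall a, mu a a = 0) /\
  (forall a b c, mu a (mu b c) + mu b (mu c a) + mu c (mu a b) = 0).

Definition lin_map (P : V -> V) : Prop :=
  forall (c : F) (u v : V), P (c *: u + v) = c *: P u + P v.

Definition nijenhuis_lie (mu : V -> V -> V) (P : V -> V) : Prop :=
  lie_bracket mu /\ lin_map P /\
  forall a b, mu (P a) (P b) = P (mu (P a) b + mu a (P b) - P (mu a b)).

Definition njl_phi (mu : V -> V -> V) (P : V -> V) : mmap * mmap :=
  (fun x => mu (x 0%N) (x 1%N), fun x => P (x 0%N)).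

End NjL.

From HB Require Import structures.
From Stdlib Require Import FunctionalExtensionality.
From mathcomp Require Import all_boot all_order all_algebra all_fingroup.
Set Implicit Arguments. Unset Strict Implicit. Unset Printing Implicit Defensive.
Import GRing.Theory.
Local Open Scope ring_scope.

(* Since V sits in degree 0, an element of degree -1 of C_NjL(V) is a pair (m, g) with
   m in Hom((sV)^⊙2, sV) and g in Hom(sV, V), i.e. an antisymmetric bilinear map mu and
   a linear map P.  In l_{k+1}(sh, g_1, ..., g_k) the Lie argument sh must have arity k,
   and all arities occurring in alpha are at most 2, so l_n(alpha, ..., alpha) = 0 for
   n >= 4 and the Maurer-Cartan series is a finite sum.  Its only Lie component is
   -1/2 l_2(m, m) = -m{m}, the Jacobiator of mu in arity 3, and its only other component
   is -1/6 l_3(alpha, alpha, alpha), the Nijenhuis torsion of P in arity 2.  Hence alpha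
   is a Maurer-Cartan element exactly when (mu, P) is a Nijenhuis Lie algebra. *)

Section PermOfSeq.
Variable n : nat.

Lemma pactE (s : 'S_n) (i : 'I_n) : pact s i = s i.
Proof. by rewrite /pact valK. Qed.

Lemma pact_id (s : 'S_n) k : (n <= k)%N -> pact s k = k.
Proof. by move=> kn; rewrite /pact insubN // -leqNgt. Qed.

Lemma pact1 k : pact (1%g : 'S_n) k = k.
Proof.
by case: (ltnP k n) => [kn|/pact_id //]; rewrite -[k]/(val (Ordinal kn)) pactE perm1.
Qed.

Lemma pactM (s t : 'S_n) k : pact (s * t) k = pact t (pact s k).
Proof.
case: (ltnP k n) => kn; last by rewrite !pact_id.
by rewrite -[k]/(val (Ordinal kn)) !pactE permM.
Qed.

Lemma pact_tperm (i j : 'I_n) k :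
  pact (tperm i j) k = if k == i then val j else if k == j then val i else k.
Proof.
case: (ltnP k n) => kn.
  rewrite -[k]/(val (Ordinal kn)) pactE permE !(inj_eq val_inj) /=.
  by case: (Ordinal kn == i); case: (Ordinal kn == j).
rewrite pact_id //; have nk m : (m < n)%N -> (k == m) = false.
  by move=> mn; apply/eqP => km; move: mn; rewrite -km ltnNge kn.
by rewrite !nk.
Qed.

(* A permutation given by its list of values [L]; when [L] is not a permutation of
   [iota 0 n] this is the identity.  Sums over 'S_n then become sums over
   [permutations (iota 0 n)], which compute for small n. *)
Definition perm_of_seq_fun (L : seq nat) (i : 'I_n) : 'I_n :=
  if perm_eq L (iota 0 n) then insubd i (nth 0%N L i) else i.

Lemma perm_of_seq_fun_val L i :
  perm_eq L (iota 0 n) -> val (perm_of_seq_fun L i) = nth 0%N L i.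
Proof.
move=> pL; rewrite /perm_of_seq_fun pL val_insubd.
have : nth 0%N L i \in L by rewrite mem_nth // (perm_size pL) size_iota.
by rewrite (perm_mem pL) mem_iota /= => ->.
Qed.

Lemma perm_of_seq_fun_inj L : injective (perm_of_seq_fun L).
Proof.
move=> i j; case pL: (perm_eq L (iota 0 n)); last by rewrite /perm_of_seq_fun pL.
move/(congr1 val); rewrite !perm_of_seq_fun_val // => /eqP.
rewrite nth_uniq ?(perm_size pL) ?size_iota // => [/eqP/val_inj //|].
by rewrite (perm_uniq pL) iota_uniq.
Qed.

Definition perm_of_seq (L : seq nat) : 'S_n := perm (@perm_of_seq_fun_inj L).

Lemma perm_of_seq_val L i : perm_eq L (iota 0 n) -> val (perm_of_seq L i) = nth 0%N L i.
Proof. by move=> pL; rewrite permE perm_of_seq_fun_val. Qed.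

Lemma pact_perm_of_seq L :
  perm_eq L (iota 0 n) -> pact (perm_of_seq L) = fun k => nth k L k.
Proof.
move=> pL; apply: functional_extensionality => k; have sL := perm_size pL.
rewrite size_iota in sL; case: (ltnP k n) => kn; last by rewrite pact_id ?nth_default ?sL.
by rewrite -[k]/(val (Ordinal kn)) pactE perm_of_seq_val // (set_nth_default k) // sL.
Qed.

Lemma perm_of_seq_enum :
  perm_eq [seq perm_of_seq L | L <- permutations (iota 0 n)] (index_enum 'S_n).
Proof.
have inj : {in permutations (iota 0 n) &, injective perm_of_seq}.
  move=> L L'; rewrite !mem_permutations => pL pL' /(congr1 (@pact n)).
  rewrite !pact_perm_of_seq // => eLL'.
  apply: (@eq_from_nth _ 0%N) => [|i]; first by rewrite (perm_size pL) (perm_size pL').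
  move=> iL; have := congr1 (fun f => f i) eLL'.
  by rewrite /= !(set_nth_default 0%N i) // (perm_size pL') -(perm_size pL).
have uniq_enum := map_inj_in_uniq inj; rewrite permutations_uniq in uniq_enum.
have size_enum :
    (size (index_enum 'S_n) <= size [seq perm_of_seq L | L <- permutations (iota 0 n)])%N.
  rewrite size_map size_permutations ?iota_uniq // size_iota -card_Sn.
  by rewrite cardT enumT [index_enum _]unlock.
have [_ eq_enum] := uniq_min_size uniq_enum (fun s _ => mem_index_enum s) size_enum.
by apply: uniq_perm => //; apply: index_enum_uniq.
Qed.

Lemma big_perm_of_seq (R : nmodType) (P : pred 'S_n) (f : 'S_n -> R) :
  \sum_(s : 'S_n | P s) f s =
  \sum_(L <- permutations (iota 0 n) | P (perm_of_seq L)) f (perm_of_seq L).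
Proof. by rewrite -(perm_big _ perm_of_seq_enum) big_map. Qed.

Lemma perm_of_seq_surj (s : 'S_n) :
  exists2 L, L \in permutations (iota 0 n) & s = perm_of_seq L.
Proof. by apply/mapP; rewrite (perm_mem perm_of_seq_enum) mem_index_enum. Qed.

End PermOfSeq.

Lemma permutations_iota2 : permutations (iota 0 2) = [:: [:: 0; 1]; [:: 1; 0]]%N.
Proof. by []. Qed.

Lemma permutations_iota3 : permutations (iota 0 3) =
  [:: [:: 1; 0; 2]; [:: 0; 1; 2]; [:: 2; 0; 1]; [:: 0; 2; 1]; [:: 1; 2; 0]; [:: 2; 1; 0]]%N.
Proof. by []. Qed.

Lemma S1_eq1 (s : 'S_1) : s = 1%g.
Proof. by apply/permP => i; rewrite !ord1. Qed.

Ltac perm_by_pact := apply/permP => -[[|[|[|i]]] lt_i] //; apply: val_inj;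
  by rewrite /= -!pactE /= ?pact_perm_of_seq // ?pactM ?pact_tperm ?pact1.

Local Notation o2 k := (@Ordinal 2 k isT).
Local Notation o3 k := (@Ordinal 3 k isT).

Lemma odd_perm_of_seq_01 : odd_perm (perm_of_seq 2 [:: 0; 1]%N) = false.
Proof. by rewrite (_ : perm_of_seq _ _ = 1%g) ?odd_perm1 //; perm_by_pact. Qed.
Lemma odd_perm_of_seq_10 : odd_perm (perm_of_seq 2 [:: 1; 0]%N) = true.
Proof. by rewrite (_ : perm_of_seq _ _ = tperm (o2 0) (o2 1)) ?odd_tperm //; perm_by_pact. Qed.
Lemma odd_perm_of_seq_012 : odd_perm (perm_of_seq 3 [:: 0; 1; 2]%N) = false.
Proof. by rewrite (_ : perm_of_seq _ _ = 1%g) ?odd_perm1 //; perm_by_pact. Qed.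
Lemma odd_perm_of_seq_021 : odd_perm (perm_of_seq 3 [:: 0; 2; 1]%N) = true.
Proof. by rewrite (_ : perm_of_seq _ _ = tperm (o3 1) (o3 2)) ?odd_tperm //; perm_by_pact. Qed.
Lemma odd_perm_of_seq_102 : odd_perm (perm_of_seq 3 [:: 1; 0; 2]%N) = true.
Proof. by rewrite (_ : perm_of_seq _ _ = tperm (o3 0) (o3 1)) ?odd_tperm //; perm_by_pact. Qed.
Lemma odd_perm_of_seq_210 : odd_perm (perm_of_seq 3 [:: 2; 1; 0]%N) = true.
Proof. by rewrite (_ : perm_of_seq _ _ = tperm (o3 0) (o3 2)) ?odd_tperm //; perm_by_pact. Qed.
Lemma odd_perm_of_seq_120 : odd_perm (perm_of_seq 3 [:: 1; 2; 0]%N) = false.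
Proof.
rewrite (_ : perm_of_seq _ _ = tperm (o3 1) (o3 2) * tperm (o3 0) (o3 1))%g.
  by rewrite odd_permM !odd_tperm.
perm_by_pact.
Qed.
Lemma odd_perm_of_seq_201 : odd_perm (perm_of_seq 3 [:: 2; 0; 1]%N) = false.
Proof.
rewrite (_ : perm_of_seq _ _ = tperm (o3 0) (o3 1) * tperm (o3 1) (o3 2))%g.
  by rewrite odd_permM !odd_tperm.
perm_by_pact.
Qed.

Lemma forall_ordE n (P : pred nat) : [forall i : 'I_n, P i] = all P (iota 0 n).
Proof.
apply/forallP/allP => [h k|h i]; last by apply: h; rewrite mem_iota ltn_ord.
by rewrite mem_iota add0n => kn; apply: (h (Ordinal kn)).
Qed.

Lemma exists_ordE n (P : pred nat) : [exists i : 'I_n, P i] = has P (iota 0 n).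
Proof.
apply/existsP/hasP => [[i Pi]|[k]]; first by exists (val i); rewrite ?mem_iota ?ltn_ord.
by rewrite mem_iota add0n => kn Pk; exists (Ordinal kn).
Qed.

Definition shuffleb (bs : seq nat) (f : nat -> nat) : bool :=
  all (fun p => all (fun q => ((p < q)%N && has (fun j => inblock bs j p && inblock bs j q)
        (iota 0 (size bs))) ==> (f p < f q)%N) (iota 0 (sumn bs))) (iota 0 (sumn bs)) &&
  all (fun j => (j.+1 < size bs)%N ==> (f (bstart bs j) < f (bstart bs j.+1))%N)
      (iota 0 (size bs)).

Lemma is_shuffleE bs (s : 'S_(sumn bs)) : is_shuffle s = shuffleb bs (pact s).
Proof.
rewrite /is_shuffle /shuffleb -!forall_ordE; congr andb.
apply: eq_forallb => p; rewrite -forall_ordE; apply: eq_forallb => q.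
by rewrite -exists_ordE !pactE.
Qed.

Lemma big_tupleS (R : nmodType) (T : finType) n (P : pred (n.+1.-tuple T))
    (f : n.+1.-tuple T -> R) :
  \sum_(t : n.+1.-tuple T | P t) f t =
  \sum_(x : T) \sum_(t : n.-tuple T | P (cons_tuple x t)) f (cons_tuple x t).
Proof.
rewrite pair_big_dep /=.
rewrite (reindex (fun p : T * n.-tuple T => cons_tuple p.1 p.2)) //.
exists (fun t => (thead t, behead_tuple t)) => [[x t] _|t _] /=.
  by congr pair; apply: val_inj.
by rewrite [t in RHS]tuple_eta; apply: val_inj.
Qed.

Lemma big_tuple0 (R : nmodType) (T : finType) (P : pred (0.-tuple T)) (f : 0.-tuple T -> R) :
  \sum_(t : 0.-tuple T | P t) f t = if P [tuple] then f [tuple] else 0.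
Proof. by rewrite big_mkcond (big_pred1 [tuple]) // => t; apply/esym/eqP/tuple0. Qed.

Lemma sgnE (F : fieldType) n : sgn F n = if odd n then -1 else 1.
Proof. by rewrite /sgn -signr_odd; case: (odd n). Qed.

Definition odd_perm_of_seqE := (odd_perm_of_seq_01, odd_perm_of_seq_10,
  odd_perm_of_seq_012, odd_perm_of_seq_021, odd_perm_of_seq_102,
  odd_perm_of_seq_120, odd_perm_of_seq_201, odd_perm_of_seq_210).

(* [brace] is a finite sum over tuples of slot sizes and over shuffle permutations;
   [expand_brace] unfolds one layer of these sums into explicit lists and evaluates the
   shuffle conditions, the permutations and their signs. *)
Ltac expand_brace :=
  rewrite ?big_tupleS; rewrite ?big_ord_recl ?big_ord0 ?big_tuple0 /=;
  rewrite ?big_perm_of_seq ?permutations_iota2 ?permutations_iota3 ?big_cons ?big_nil /=;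
  rewrite ?is_shuffleE ?pact_perm_of_seq // /= ?odd_perm_of_seqE /bump /bstart /=.

Section BraceComputations.
Variables (F : fieldType) (V : lmodType F) (mu : V -> V -> V) (P : V -> V).

Local Notation m := (fun x : nat -> V => mu (x 0%N) (x 1%N)).
Local Notation g := (fun x : nat -> V => P (x 0%N)).

Definition jacobiator a b c := mu (mu a b) c - mu (mu a c) b - mu a (mu b c).

Definition nijenhuis_torsion a b :=
  mu (P a) (P b) - P (mu (P a) b + mu a (P b)) + P (P (mu a b)).

Ltac simpl_signs := rewrite /= ?sgnE /= ?mulN1r ?mul1r ?opprK ?scaleN1r ?scale1r ?add0r ?addr0.

Lemma brace_m_nil x : brace m 2 [::] x = mu (x 0%N) (x 1%N).
Proof. by rewrite /brace; do 4 expand_brace; simpl_signs. Qed.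

Lemma brace_g_comp (G : mmap V) x : brace g 1 [:: (G, 2%N)] x = P (G x).
Proof.
rewrite /brace; do 4 expand_brace; simpl_signs; congr (P (G _)).
by apply: functional_extensionality => -[|[|r]] //=; rewrite nth_nil.
Qed.

Lemma brace_m_g x :
  brace m 2 [:: (g, 1%N)] x = mu (P (x 0%N)) (x 1%N) + mu (x 0%N) (P (x 1%N)).
Proof. by rewrite /brace; do 4 expand_brace; simpl_signs. Qed.

Lemma brace_m_gg x : brace m 2 [:: (g, 1%N); (g, 1%N)] x = mu (P (x 0%N)) (P (x 1%N)).
Proof. by rewrite /brace; do 4 expand_brace; simpl_signs. Qed.

Lemma brace_m_m x : brace m 2 [:: (m, 2%N)] x = jacobiator (x 0%N) (x 1%N) (x 2%N).
Proof. by rewrite /brace; do 4 expand_brace; simpl_signs. Qed.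

Lemma lLie_m_gg x :
  lLie m [:: (g, 1%N); (g, 1%N)] x = -2 *: nijenhuis_torsion (x 0%N) (x 1%N).
Proof.
rewrite /lLie big_perm_of_seq permutations_iota2 !big_cons big_nil /=.
rewrite !pact_perm_of_seq // /= !odd_perm_of_seqE.
rewrite !big_ord_recl !big_ord0 /= !perm_of_seq_val // /bump /= !big_cons !big_nil /=.
rewrite !brace_g_comp !brace_m_gg !brace_m_g !brace_m_nil; simpl_signs.
by rewrite addrA mul1r scaleN1r -opprD scaleNr scaler_nat mulr2n.
Qed.

End BraceComputations.

Section MaurerCartanSeries.
Variables (F : fieldType) (V : lmodType F).
Implicit Types (alpha : mmap V * mmap V) (w : seq bool).

Lemma lbr_many_low_arity (es : seq (hel V)) :
  (4 <= size es)%N -> all (fun e => har e <= 2)%N es -> lbr es = czero V.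
Proof.
(* The first two entries only block the pattern match of [lbr]; once it reduces to
   its generic branch the four cases are identical. *)
case: es => [|e1 [|e2 [|e3 es]]] //; rewrite /lbr;
  case: e1 => a f; case: e2 => b h; cbv beta iota;
  move=> es_ge4 har_le2;
  match goal with |- context [iota 0 (size ?L)] => set es' := L in es_ge4 har_le2 * end;
  clearbody es'.
all: case E: [seq i <- iota 0 (size es') | isLie (nth (hdef V) es' i)] => [|k [|? ?]] //.
all: have count_Lie : count (@isLie F V) es' = 1%N
  by rewrite -[in LHS](mkseq_nth (hdef V) es') count_map -size_filter E.
all: have size_gs : size [seq (hfn e, har e) | e <- es' & ~~ isLie e] = (size es').-1
  by rewrite size_map size_filter -(count_predC (@isLie F V) es') count_Lie.
all: rewrite size_gs; case: ifP => // /andP[/eqP har_k _].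
all: have har_k_le2 : (har (nth (hdef V) es' k) <= 2)%N
  by case: (ltnP k (size es')) => k_size;
     [exact: (all_nthP _ har_le2)|rewrite nth_default].
all: by move: har_k_le2; rewrite har_k; case: (size es') es_ge4 => [|[|[|[|n]]]].
Qed.

Lemma lbr_alpha_list_large alpha w : (4 <= size w)%N -> lbr (alpha_list alpha w) = czero V.
Proof.
move=> w_ge4; apply: lbr_many_low_arity; first by rewrite size_map.
by rewrite all_map; apply/allP => -[].
Qed.

Lemma mc_psum_stable alpha N : (3 <= N)%N -> mc_psum alpha N = mc_psum alpha 3.
Proof.
move=> N_ge3; rewrite /mc_psum.
by congr Cel; do 2 apply: functional_extensionality => ?;
  rewrite (@big_cat_nat _ _ _ 4) //= [X in _ + X]big1_seq ?addr0 // => n /andP[_];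
  rewrite mem_index_iota => /andP[n_ge4 _];
  rewrite big1 ?scaler0 // => w _; rewrite lbr_alpha_list_large ?size_tuple.
Qed.

Lemma MC_elementE alpha : MC_element alpha <->
  deg_m1 alpha /\ forall r, (0 < r)%N -> forall x : nat -> V,
    clie (mc_psum alpha 3) r x = 0 /\ cnjo (mc_psum alpha 3) r x = 0.
Proof.
split=> [[dm mc]|[dm mc]]; split=> // r r_gt0 x.
  have [N0 mcN] := mc r r_gt0 x.
  by rewrite -(mc_psum_stable alpha (leq_maxr N0 3)); apply/mcN/leq_maxl.
by exists 3%N => N N_ge3; rewrite mc_psum_stable //; apply: mc.
Qed.

Lemma mc_psum_clie_njl_phi (mu : V -> V -> V) (P : V -> V) r x :
  (2%:R : F) != 0 ->
  clie (mc_psum (njl_phi mu P) 3) r x =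
  if r == 3%N then - jacobiator mu (x 0%N) (x 1%N) (x 2%N) else 0.
Proof.
move=> two_neq0.
rewrite /mc_psum /= big_ltn // big_ltn // big_ltn // big_geq // addr0.
do 3 rewrite ?big_tupleS ?big_bool; rewrite ?big_tuple0 /=.
rewrite (_ : (2 + 2 - 1)%N = 3%N) //.
case: (r == 3%N); rewrite ?addr0 ?scaler0 ?add0r ?addr0 //.
rewrite /rn brace_m_m !sgnE /= scaleN1r opprK -mulr2n -scaler_nat scalerA divfK //.
by rewrite scaleN1r.
Qed.

Lemma mc_psum_cnjo_njl_phi (mu : V -> V -> V) (P : V -> V) r x :
  (2%:R : F) != 0 -> (3%:R : F) != 0 ->
  cnjo (mc_psum (njl_phi mu P) 3) r x =
  if r == 2%N then nijenhuis_torsion mu P (x 0%N) (x 1%N) else 0.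
Proof.
move=> two_neq0 three_neq0.
rewrite /mc_psum /= big_ltn // big_ltn // big_ltn // big_geq // addr0.
do 3 rewrite ?big_tupleS ?big_bool; rewrite ?big_tuple0 /=.
case: (r == 2%N); rewrite ?addr0 ?scaler0 ?add0r ?addr0 //.
have six_neq0 : (3`!%:R : F) != 0 by rewrite (natrM F 2 3) mulf_neq0.
rewrite !lLie_m_gg !sgnE /= !scale1r -!scalerDl scalerA -!opprD mulNr mulrN.
by rewrite mulNr opprK mul1r -!natrD mulVf ?scale1r.
Qed.
End MaurerCartanSeries.

Section LieNijenhuis.
Variables (F : fieldType) (V : lmodType F).
Implicit Types (mu : V -> V -> V) (P : V -> V).

Lemma lin_mapB P : lin_map P -> forall u v, P (u - v) = P u - P v.
Proof. exact: zmod_morphism_linear. Qed.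

Lemma lin_map0 P : lin_map P -> P 0 = 0.
Proof. by move=> LP; have := lin_mapB LP 0 0; rewrite !subrr. Qed.

Lemma lin_mapN P : lin_map P -> forall u, P (- u) = - P u.
Proof. by move=> LP u; rewrite -[- u]sub0r (lin_mapB LP) (lin_map0 LP) sub0r. Qed.

Lemma lin_mapD P : lin_map P -> forall u v, P (u + v) = P u + P v.
Proof. by move=> LP u v; rewrite -{1}[v]opprK (lin_mapB LP) (lin_mapN LP) opprK. Qed.

Lemma nijenhuis_torsion_eq0 mu P a b : lin_map P ->
  nijenhuis_torsion mu P a b = 0 <->
  mu (P a) (P b) = P (mu (P a) b + mu a (P b) - P (mu a b)).
Proof.
move=> LP; rewrite /nijenhuis_torsion (lin_mapB LP); split=> [/eqP|->].
  by rewrite addrAC subr_eq0 eq_sym -subr_eq eq_sym => /eqP.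
by rewrite addrAC subrK subrr.
Qed.

Lemma jacobiatorE mu : (forall a, lin_map (mu a)) -> (forall a b, mu b a = - mu a b) ->
  forall a b c, jacobiator mu a b c = - (mu a (mu b c) + mu b (mu c a) + mu c (mu a b)).
Proof.
move=> lin_r anti a b c; rewrite /jacobiator (anti c (mu a b)) (anti b (mu a c)) (anti c a).
by rewrite (lin_mapN (lin_r b)) opprK !opprD addrC [- mu c _ - _]addrC addrA.
Qed.

Lemma lie_bracketP mu : (2%:R : F) != 0 ->
  lie_bracket mu <-> [/\ forall b, lin_map (mu^~ b), forall a, lin_map (mu a),
                         forall a b, mu b a = - mu a b &
                         forall a b c, jacobiator mu a b c = 0].
Proof.
move=> two_neq0; split=> [[lin_l [lin_r [alt jacobi]]]|[lin_l lin_r anti jac0]].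
  have lin_l' b : lin_map (mu^~ b) by move=> c u v; apply: lin_l.
  have lin_r' a : lin_map (mu a) by move=> c u v; apply: lin_r.
  have anti a b : mu b a = - mu a b.
    have := alt (a + b); rewrite (lin_mapD (lin_l' _)) !(lin_mapD (lin_r' _)) !alt.
    by rewrite add0r addr0 => /eqP; rewrite addrC addr_eq0 => /eqP.
  by split=> // a b c; rewrite jacobiatorE // jacobi oppr0.
split; first by move=> c a a' b; apply: lin_l.
split; first by move=> c a b b'; apply: lin_r.
split=> [a|a b c].
  have : mu a a + mu a a = 0 by rewrite {1}anti addNr.
  by rewrite -mulr2n -scaler_nat => /eqP; rewrite scaler_eq0 (negbTE two_neq0) => /eqP.
by apply/eqP; rewrite -oppr_eq0 -jacobiatorE // jac0.
Qed.

Lemma deg_m1_njl_phiP mu P : deg_m1 (njl_phi mu P) <->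
  [/\ forall b, lin_map (mu^~ b), forall a, lin_map (mu a),
      forall a b, mu b a = - mu a b & lin_map P].
Proof.
split=> [[[_ ml_m] [si_m [[_ ml_g] _]]]|[lin_l lin_r anti LP]].
  split=> [b c u v|a c u v|a b|c u v].
  - exact: (ml_m 0%N isT (fun=> b)).
  - exact: (ml_m 1%N isT (fun=> a)).
  - have := si_m (perm_of_seq 2 [:: 1; 0]%N) (nth 0 [:: b; a]).
    by rewrite pact_perm_of_seq // odd_perm_of_seq_10 sgnE scaleN1r.
  - exact: (ml_g 0%N isT (fun=> u)).
split; [|split; [|split]].
- split=> [x y eq_xy|]; first by rewrite /= !eq_xy.
  by case=> [|[|i]] // _ x c u v; rewrite /upd /=; [apply: lin_l|apply: lin_r].
- move=> s x; have [L] := perm_of_seq_surj s.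
  rewrite permutations_iota2 !inE => /orP[] /eqP -> ->; rewrite pact_perm_of_seq //=.
    by rewrite odd_perm_of_seq_01 sgnE scale1r.
  by rewrite odd_perm_of_seq_10 sgnE scaleN1r -anti.
- split=> [x y eq_xy|]; first by rewrite /= eq_xy.
  by case=> [|i] // _ x c u v; apply: LP.
- by move=> s x; rewrite (S1_eq1 s) odd_perm1 sgnE scale1r /= pact1.
Qed.

Lemma nijenhuis_lie_njl_phiP mu P : (2%:R : F) != 0 ->
  nijenhuis_lie mu P <->
  [/\ deg_m1 (njl_phi mu P), forall a b c, jacobiator mu a b c = 0
    & forall a b, nijenhuis_torsion mu P a b = 0].
Proof.
move=> two_neq0; split=> [[/(lie_bracketP _ two_neq0) [lin_l lin_r anti jac0] [LP nij]]|].
  split=> [|//|a b]; first exact/deg_m1_njl_phiP.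
  exact/(nijenhuis_torsion_eq0 _ _ _ LP).
case=> /deg_m1_njl_phiP [lin_l lin_r anti LP] jac0 tor0.
split; first exact/lie_bracketP.
by split=> // a b; apply/(nijenhuis_torsion_eq0 _ _ _ LP).
Qed.

Lemma MC_element_njl_phiP mu P : (2%:R : F) != 0 -> (3%:R : F) != 0 ->
  MC_element (njl_phi mu P) <->
  [/\ deg_m1 (njl_phi mu P), forall a b c, jacobiator mu a b c = 0
    & forall a b, nijenhuis_torsion mu P a b = 0].
Proof.
move=> two_neq0 three_neq0; split=> [/MC_elementE [dm mc]|[dm jac0 tor0]].
  split=> // [a b c|a b].
    have [+ _] := mc 3%N isT (nth 0 [:: a; b; c]).
    by rewrite mc_psum_clie_njl_phi //= => /eqP; rewrite oppr_eq0 => /eqP.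
  by have [_ +] := mc 2%N isT (nth 0 [:: a; b]); rewrite mc_psum_cnjo_njl_phi.
apply/MC_elementE; split=> // r _ x.
by rewrite mc_psum_clie_njl_phi // mc_psum_cnjo_njl_phi // jac0 tor0 oppr0 !if_same.
Qed.

Lemma MC_element_njl_phi mu P : (2%:R : F) != 0 -> (3%:R : F) != 0 ->
  MC_element (njl_phi mu P) <-> nijenhuis_lie mu P.
Proof.
move=> two_neq0 three_neq0.
exact: iff_trans (MC_element_njl_phiP _ _ two_neq0 three_neq0)
                 (iff_sym (nijenhuis_lie_njl_phiP _ _ two_neq0)).
Qed.

Lemma deg_m1_njl_phi_repr (alpha : mmap V * mmap V) : deg_m1 alpha ->
  alpha = njl_phi (fun a b => alpha.1 (nth 0 [:: a; b])) (fun a => alpha.2 (nth 0 [:: a])).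
Proof.
case: alpha => m g [[m_loc _] [_ [[g_loc _] _]]].
by congr pair; apply: functional_extensionality => x;
  [apply: m_loc => -[|[|i]] | apply: g_loc => -[|i]].
Qed.

Lemma njl_phi_inj mu mu' P P' : njl_phi mu P = njl_phi mu' P' -> mu = mu' /\ P = P'.
Proof.
case=> eq_m eq_g; split.
  apply: functional_extensionality => a; apply: functional_extensionality => b.
  by have := congr1 (fun m => m (nth 0 [:: a; b])) eq_m.
apply: functional_extensionality => a.
by have := congr1 (fun g => g (nth 0 [:: a])) eq_g.
Qed.
End LieNijenhuis.

Theorem proposition9p3 (F : fieldType) (V : lmodType F)
  (char0 : [pchar F] =i pred0) :
  (forall (mu : V -> V -> V) (P : V -> V),
      nijenhuis_lie mu P -> MC_element (njl_phi mu P)) /\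
  (forall alpha : mmap V * mmap V, MC_element alpha ->
      exists! muP : (V -> V -> V) * (V -> V),
        nijenhuis_lie muP.1 muP.2 /\ njl_phi muP.1 muP.2 = alpha).
Proof.
have [two_neq0 three_neq0] : (2%:R : F) != 0 /\ (3%:R : F) != 0.
  by move/pcharf0P: char0 => char0; rewrite !char0.
split=> [mu P|alpha MC_alpha].
  by move/(MC_element_njl_phi _ _ two_neq0 three_neq0).
have [dm _] := MC_alpha; move: MC_alpha; rewrite (deg_m1_njl_phi_repr dm).
set mu := fun a b => _; set P := fun a => _ => MC_alpha.
exists (mu, P); split; first by split; first exact/MC_element_njl_phi.
by move=> [mu' P'] [_ /= /njl_phi_inj [-> ->]].
Qed.
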